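(* Let $r\in\mathbb{Z}$, $r\neq1$, and $A_r=\left(\frac{1+x(r-1)}{1-x};\ \frac{1}{(1-x)^2},\ \frac{x}{1-x}\right)$. Then every element of the cyclic subgroup $\{A_r^p:p\in\mathbb{Z}\}$ of the group of almost Riordan arrays of first order is a pseudo-involution.
   Context: All matrices are infinite lower-triangular with rows and columns indexed by $n,k\ge0$ and integer entries. $[x^n]h(x)$ denotes the coefficient of $x^n$ in $h$. An almost Riordan array of first order is a triple $(a;g,f)$ of formal power series with $a_0=1$, $g_0=1$, $f_0=0$, $f_1=1$; its associated matrix $M$ is given by $M_{0,0}=a_0$, $M_{0,k}=0$ for $k\ge1$, $M_{n,0}=a_n$ for $n\ge1$, and $M_{n,k}=[x^{n-1}]\,g(x)f(x)^{k-1}$ for $n,k\ge1$. These matrices form a group under matrix multiplication. $I$ is the identity matrix and $\bar I$ is the diagonal matrix with diagonal $(1,-1,1,-1,\dots)$. An element with matrix $M$ is a pseudo-involution if $(M\bar I)^2=I$. *)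

From HB Require Import structures.
From mathcomp Require Import all_boot all_order all_algebra.
Set Implicit Arguments. Unset Strict Implicit. Unset Printing Implicit Defensive.
Import Order.TTheory GRing.Theory Num.Theory.
Local Open Scope ring_scope.

(* Formal power series over Z, given by their coefficient sequences. *)
Definition series := nat -> int.

Definition smul (a b : series) : series :=
  fun n => \sum_(i < n.+1) a i * b (n - i)%N.

Definition sone : series := fun n => if n == 0%N then 1 else 0.

Fixpoint spow (f : series) (k : nat) : series :=
  match k with 0%N => sone | k'.+1 => smul f (spow f k') end.

(* 1/(1-x) *)
Definition sgeom : series := fun _ => 1.
Definition sX : series := fun n => if n == 1%N then 1 else 0.
Definition slin (r : int) : series :=
  fun n => if n == 0%N then 1 else if n == 1%N then r - 1 else 0.

Definition mat := nat -> nat -> int.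

(* Matrix associated with the almost Riordan array (a; g, f) *)
Definition ara_mat (a g f : series) : mat :=
  fun n k =>
    if k == 0%N then a n
    else if n == 0%N then 0
    else smul g (spow f k.-1) n.-1.

(* Product of (lower-triangular) infinite matrices: sum over j <= n *)
Definition mmul (M N : mat) : mat :=
  fun n k => \sum_(j < n.+1) M n j * N j k.

Definition mid : mat := fun n k => if n == k then 1 else 0.
Definition mIbar : mat := fun n k => if n == k then (-1) ^+ n else 0.

Fixpoint mpow (M : mat) (p : nat) : mat :=
  match p with 0%N => mid | p'.+1 => mmul M (mpow M p') end.

Definition mat_eq (M N : mat) : Prop := forall n k, M n k = N n k.

Definition lower_tri (M : mat) : Prop := forall n k, (n < k)%N -> M n k = 0.

Definition pseudo_involution (M : mat) : Prop :=
  mat_eq (mmul (mmul M mIbar) (mmul M mIbar)) mid.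

Definition A_r (r : int) : mat :=
  ara_mat (smul (slin r) sgeom) (smul sgeom sgeom) (smul sX sgeom).

(* M belongs to the cyclic subgroup generated by A: M = A^p for p >= 0,
   or M is the (lower-triangular) inverse of A^p, i.e. M = A^(-p). *)
Definition in_cyclic_subgroup (A M : mat) : Prop :=
  exists p : nat, mat_eq M (mpow A p) \/
                  (lower_tri M /\ mat_eq (mmul M (mpow A p)) mid).

From HB Require Import structures.
From mathcomp Require Import all_boot all_order all_algebra.
From Stdlib Require Import FunctionalExtensionality.
From mathcomp Require Import ring.
Import Order.TTheory GRing.Theory Num.Theory.
Local Open Scope ring_scope.

(* Lower-triangular infinite matrices form a monoid under
     [mmul].  If E is lower triangular and E*Ibar is an involution, then
     F := Ibar*E*Ibar is a two-sided inverse of E and Ibar*E = F*Ibar,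
     Ibar*F = E*Ibar.  Hence Ibar*E^p = F^p*Ibar, so (E^p Ibar)^2 = E^p F^p = I,
     and symmetrically (F^p Ibar)^2 = I; the inverse of E^p is F^p.
   - Computational part.  Summing power series shows that A_r has entries
     1, r, r, ... in column 0 and binomial coefficients C(n,k) in columns
     k >= 1.  That (A_r Ibar)^2 = I then reduces to the binomial inversion
     formula  sum_j (-1)^j C(n,j) C(j,k) = (-1)^n [k = n]. *)

Lemma mat_ext (M N : mat) : mat_eq M N -> M = N.
Proof.
by move=> eqMN; do 2 (apply: functional_extensionality => ?); exact: eqMN.
Qed.

(* Since [mmul] sums only over j <= n, lower-triangularity of the right
   factor alone makes a product lower triangular. *)
Lemma lower_tri_mmul M N : lower_tri N -> lower_tri (mmul M N).
Proof.
move=> triN n k ltnk; rewrite /mmul big1 // => j _.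
by rewrite triN ?mulr0 // (leq_ltn_trans _ ltnk) // -ltnS ltn_ord.
Qed.

Lemma lower_tri_mid : lower_tri mid.
Proof. by move=> n k ltnk; rewrite /mid ltn_eqF. Qed.

Lemma lower_tri_mIbar : lower_tri mIbar.
Proof. by move=> n k ltnk; rewrite /mIbar ltn_eqF. Qed.

Lemma lower_tri_mpow M p : lower_tri M -> lower_tri (mpow M p).
Proof.
by move=> triM; elim: p => [|p IHp] /=; [exact: lower_tri_mid | exact: lower_tri_mmul].
Qed.

Ltac lower_tri_auto :=
  repeat first [ assumption | apply: lower_tri_mmul | apply: lower_tri_mpow
               | exact: lower_tri_mid | exact: lower_tri_mIbar ].
#[local] Hint Extern 0 (lower_tri _) => solve [lower_tri_auto] : core.

Lemma mmul_diag M (D : mat) (d : nat -> int) : lower_tri M ->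
  (forall j k, D j k = if j == k then d k else 0) ->
  mmul M D = fun n k => M n k * d k.
Proof.
move=> triM Dd; apply: mat_ext => n k; rewrite /mmul.
case: (ltnP n k) => [ltnk | lekn].
  rewrite triM // mul0r big1 // => j _; rewrite Dd ltn_eqF ?mulr0 //.
  by rewrite (leq_ltn_trans _ ltnk) // -ltnS ltn_ord.
rewrite (bigD1 (Ordinal (lekn : (k < n.+1)%N))) //= Dd eqxx big1 ?addr0 // => j.
by rewrite -val_eqE /= Dd => /negbTE ->; rewrite mulr0.
Qed.

Lemma mmulm1 M : lower_tri M -> mmul M mid = M.
Proof.
move=> triM; rewrite (@mmul_diag _ _ (fun=> 1)) //.
by apply: mat_ext => n k; rewrite mulr1.
Qed.

Lemma mmul_mIbar M : lower_tri M -> mmul M mIbar = fun n k => M n k * (-1) ^+ k.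
Proof. by move=> triM; apply: mmul_diag => // j k; rewrite /mIbar; case: eqP => [->|]. Qed.

Lemma mmul1m N : mmul mid N = N.
Proof.
apply: mat_ext => n k; rewrite /mmul big_ord_recr /= /mid eqxx mul1r big1 ?add0r //.
by move=> j _; rewrite eq_sym (ltn_eqF (ltn_ord j)) mul0r.
Qed.

(* Associativity needs the middle factor to be lower triangular, so that the
   truncated sums defining [mmul] range over the same indices. *)
Lemma mmulA M N P : lower_tri N -> mmul (mmul M N) P = mmul M (mmul N P).
Proof.
move=> triN; apply: mat_ext => n k; rewrite /mmul.
under eq_bigr do rewrite mulr_suml.
rewrite exchange_big /=; apply: eq_bigr => i _; rewrite mulr_sumr.
rewrite (big_ord_widen n.+1 (fun j => M n i * (N i j * P j k))) ?ltn_ord //.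
rewrite [RHS]big_mkcond /=; apply: eq_bigr => j _; rewrite mulrA.
by case: ifP => // /negbT; rewrite -leqNgt => ltij; rewrite triN ?mulr0 ?mul0r.
Qed.

Lemma sign_sqr n : (-1) ^+ n * (-1) ^+ n = 1 :> int.
Proof. by rewrite -exprD -signr_odd addnn odd_double. Qed.

Lemma mIbar_invol : mmul mIbar mIbar = mid.
Proof.
rewrite mmul_mIbar //; apply: mat_ext => n k; rewrite /mIbar /mid.
by case: eqP => [->|]; rewrite ?sign_sqr ?mul0r.
Qed.

Lemma mpowSr M p : lower_tri M -> mpow M p.+1 = mmul (mpow M p) M.
Proof.
move=> triM; elim: p => [|p IHp]; first by rewrite /= mmulm1 // mmul1m.
by rewrite /= in IHp *; rewrite [RHS]mmulA // -IHp.
Qed.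

Lemma mpow_right_inverse X Y p : lower_tri X -> lower_tri Y -> mmul X Y = mid ->
  mmul (mpow X p) (mpow Y p) = mid.
Proof.
move=> triX triY XY; elim: p => [|p IHp]; first by rewrite /= mmul1m.
by rewrite mpowSr //= mmulA // -(mmulA _ _ _ triY) XY mmul1m IHp.
Qed.

Lemma mIbar_mpow X Y q : lower_tri X -> lower_tri Y ->
  mmul mIbar X = mmul Y mIbar -> mmul mIbar (mpow X q) = mmul (mpow Y q) mIbar.
Proof.
move=> triX triY JX; elim: q => [|q IHq] /=; first by rewrite mmul1m mmulm1.
by rewrite -mmulA // JX mmulA // IHq -mmulA.
Qed.

(* If Y inverts X and Ibar intertwines them, every power X^p is a
   pseudo-involution: (X^p Ibar)^2 = X^p Y^p Ibar Ibar = I. *)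
Lemma mpow_Ibar_invol X Y p : lower_tri X -> lower_tri Y -> mmul X Y = mid ->
  mmul mIbar X = mmul Y mIbar ->
  mmul (mmul (mpow X p) mIbar) (mmul (mpow X p) mIbar) = mid.
Proof.
move=> triX triY XY JX.
rewrite mmulA // -(mmulA mIbar) // (mIbar_mpow _ _ p triX triY JX).
by rewrite mmulA // mIbar_invol mmulm1 // mpow_right_inverse.
Qed.

Section CyclicSubgroup.

Variable E : mat.
Hypothesis triE : lower_tri E.
Hypothesis EIbar_invol : mmul (mmul E mIbar) (mmul E mIbar) = mid.

(* The inverse of E, obtained by conjugating E with Ibar. *)
Let F : mat := mmul mIbar (mmul E mIbar).

Let triF : lower_tri F. Proof. exact: lower_tri_mmul. Qed.

Let EF : mmul E F = mid.
Proof. by rewrite -EIbar_invol mmulA. Qed.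

(* Conjugating (E Ibar)^2 = I by Ibar gives (Ibar E Ibar) E = I. *)
Let FE : mmul F E = mid.
Proof.
have <- : mmul mIbar (mmul (mmul (mmul E mIbar) (mmul E mIbar)) mIbar) = mid.
  by rewrite EIbar_invol mmul1m mIbar_invol.
by rewrite /F !mmulA // mIbar_invol mmulm1.
Qed.

Let JE : mmul mIbar E = mmul F mIbar.
Proof. by rewrite !mmulA // mIbar_invol mmulm1. Qed.

Let JF : mmul mIbar F = mmul E mIbar.
Proof. by rewrite -mmulA // mIbar_invol mmul1m. Qed.

(* Powers of E are handled by [mpow_Ibar_invol] for (E, F); the inverse of
   E^p is F^p, handled by [mpow_Ibar_invol] for (F, E). *)
Lemma cyclic_subgroup_pseudo_involution M :
  in_cyclic_subgroup E M -> pseudo_involution M.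
Proof.
move=> [p [/mat_ext -> | [triM /mat_ext MEp]]].
  by rewrite /pseudo_involution (mpow_Ibar_invol _ _ p triE triF EF JE).
have -> : M = mpow F p.
  rewrite -(mmulm1 _ triM) -(mpow_right_inverse _ _ p triE triF EF).
  by rewrite -mmulA // MEp mmul1m.
by rewrite /pseudo_involution (mpow_Ibar_invol _ _ p triF triE FE JF).
Qed.

End CyclicSubgroup.

(* Binomial inversion: the Pascal matrix with alternating signs is an
   involution.  It is read off the coefficients of (-X)^n = (1 - (X+1))^n. *)

Lemma coef_signM j (p : {poly int}) i : ((-1) ^+ j * p)`_i = (-1) ^+ j * p`_i.
Proof.
have -> : (-1) ^+ j = ((-1) ^+ j)%:P :> {poly int} by rewrite rmorphXn rmorphN1.
by rewrite coefCM.
Qed.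

Lemma coef_XaddX1_pow j k : (('X + 1) ^+ j : {poly int})`_k = ('C(j, k))%:R.
Proof.
rewrite exprD1n coef_sum.
under eq_bigr do rewrite coefMn coefXn.
case: (ltnP j k) => [ltjk | lekj].
  rewrite bin_small // big1 // => i _; rewrite gtn_eqF ?mul0rn //.
  by rewrite (leq_ltn_trans _ ltjk) // -ltnS ltn_ord.
rewrite (bigD1 (Ordinal (lekj : (k < j.+1)%N))) //= eqxx big1 ?addr0 // => i.
by rewrite -val_eqE /= eq_sym => /negbTE ->; rewrite mul0rn.
Qed.

Lemma binomial_inversion n k :
  \sum_(j < n.+1) (-1) ^+ j * ('C(n, j) * 'C(j, k))%:R
    = (-1) ^+ n * (k == n)%:R :> int.
Proof.
have expand : (- 'X : {poly int}) ^+ n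
    = \sum_(j < n.+1) (-1) ^+ j * ('X + 1) ^+ j *+ 'C(n, j).
  have -> : (- 'X : {poly int}) = - ('X + 1) + 1 by rewrite opprD subrK.
  by rewrite exprD1n; apply: eq_bigr => j _; rewrite [in LHS]exprNn.
have := congr1 (fun p : {poly int} => p`_k) expand.
rewrite [(- 'X) ^+ n]exprNn coef_signM coefXn coef_sum => ->.
apply: eq_bigr => j _; rewrite coefMn coef_signM coef_XaddX1_pow natrM.
by rewrite -mulrnAr -[in RHS]mulr_natl.
Qed.

Lemma alternating_binomial_sum n :
  \sum_(j < n.+1) ('C(n.+1, j.+1))%:R * (-1) ^+ j.+1 = -1 :> int.
Proof.
have := binomial_inversion n.+1 0; rewrite mulr0 big_ord_recl /= => sum0.
apply: (addrI 1); rewrite subrr -[in RHS]sum0 bin0 expr0 mul1r; congr (_ + _).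
by apply: eq_bigr => j _; rewrite bin0 muln1 mulrC.
Qed.

(* Coefficients of the series defining A_r.  Multiplying by 1/(1-x) takes
   partial sums; together with the hockey-stick identity this identifies the
   column g f^k with a column of Pascal's triangle. *)

Definition psum (c : series) (m : nat) : int := \sum_(t < m) c t.

Lemma smul_ext a b b' m : (forall n, b n = b' n) -> smul a b m = smul a b' m.
Proof. by move=> eqbb'; apply: eq_bigr => i _; rewrite eqbb'. Qed.

Lemma smul_sone a m : smul a sone m = a m.
Proof.
rewrite /smul big_ord_recr /= subnn /sone eqxx mulr1 big1 ?add0r // => i _.
by rewrite subn_eq0 leqNgt ltn_ord mulr0.
Qed.

Lemma smul_psum a b m : smul a (psum b) m = psum (smul a b) m.
Proof.
elim: m => [|m IHm]; first by rewrite /smul /psum big_ord1 big_ord0 mulr0 big_ord0.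
transitivity (smul a (psum b) m + smul a b m); last first.
  by rewrite IHm /psum [in RHS]big_ord_recr.
rewrite /smul big_ord_recr /= subnn {2}/psum big_ord0 mulr0 addr0 -big_split /=.
apply: eq_bigr => i _; rewrite subSn; last by rewrite -ltnS.
by rewrite /psum big_ord_recr /= mulrDr.
Qed.

Lemma smul_sgeom c m : smul sgeom c m = psum c m.+1.
Proof.
elim: m => [|m IHm]; first by rewrite /smul /psum !big_ord1 mul1r.
rewrite /smul big_ord_recl /= subn0 mul1r.
rewrite /psum [RHS]big_ord_recr /= -/(psum c m.+1) -IHm addrC /smul.
by congr (_ + _); apply: eq_bigr => i _; rewrite /bump /= add1n subSS.
Qed.

Lemma coef_xgeom i : smul sX sgeom i = (i != 0%N)%:R.
Proof.
case: i => [|i]; first by rewrite /smul big_ord1.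
by rewrite /smul big_ord_recl /= big_ord_recl /= big1 ?addr0.
Qed.

Lemma smul_xgeom c m : smul (smul sX sgeom) c m = psum c m.
Proof.
set f := smul sX sgeom; have f0 : f 0%N = 0 by rewrite /f coef_xgeom.
case: m => [|m]; first by rewrite /smul big_ord1 f0 mul0r /psum big_ord0.
rewrite /smul big_ord_recl /= f0 mul0r add0r -smul_sgeom /smul.
by apply: eq_bigr => i _; rewrite /f coef_xgeom /bump /= add1n subSS.
Qed.

Lemma coef_geom2 m : smul sgeom sgeom m = (m.+1)%:R.
Proof. by rewrite smul_sgeom /psum sumr_const card_ord. Qed.

Lemma hockey_stick m k :
  psum (fun t => ('C(t.+1, k.+1))%:R) m = ('C(m.+1, k.+2))%:R :> int.
Proof.
elim: m => [|m IHm]; first by rewrite /psum big_ord0 bin_small.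
by move: IHm; rewrite /psum big_ord_recr /= => ->; rewrite -natrD [in RHS]binS.
Qed.

Lemma coef_column_A_r k m :
  smul (smul sgeom sgeom) (spow (smul sX sgeom) k) m = ('C(m.+1, k.+1))%:R.
Proof.
elim: k m => [|k IHk] m /=; first by rewrite smul_sone coef_geom2 bin1.
rewrite (@smul_ext _ _ _ _ (smul_xgeom _)) smul_psum -hockey_stick.
by apply: eq_bigr => i _; exact: IHk.
Qed.

Lemma coef_column0_A_r r n : smul (slin r) sgeom n = if n == 0%N then 1 else r.
Proof.
case: n => [|n]; first by rewrite /smul big_ord1 /slin /sgeom mulr1.
rewrite /smul big_ord_recl big_ord_recl /= big1 ?addr0.
  by rewrite /slin /sgeom /= !mulr1 addrC subrK.
by move=> i _; rewrite /slin /bump /= mul0r.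
Qed.

Definition pascal_r (r : int) : mat := fun n k =>
  if k == 0%N then (if n == 0%N then 1 else r) else ('C(n, k))%:R.

Lemma A_rE r : A_r r = pascal_r r.
Proof.
apply: mat_ext => n [|k]; rewrite /A_r /ara_mat /pascal_r coef_column0_A_r //=.
by case: n => [|n] //=; rewrite coef_column_A_r.
Qed.

Lemma lower_tri_pascal_r r : lower_tri (pascal_r r).
Proof. by move=> n [|k] ltnk //; rewrite /pascal_r /= bin_small. Qed.

(* The computational heart: (A_r Ibar)^2 = I.  Column 0 uses the alternating
   sum of binomials, the other columns binomial inversion. *)
Lemma pascal_r_Ibar_invol r :
  mmul (mmul (pascal_r r) mIbar) (mmul (pascal_r r) mIbar) = mid.
Proof.
rewrite mmul_mIbar; last exact: lower_tri_pascal_r.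
apply: mat_ext => n [|k]; rewrite /mmul /mid.
  case: n => [|n]; first by rewrite big_ord1 /pascal_r /= !mulr1.
  rewrite big_ord_recl /pascal_r /= !mulr1 -[RHS](subrr r); congr (_ + _).
  by rewrite -mulr_suml alternating_binomial_sum mulN1r.
have term j : pascal_r r n j * (-1) ^+ j * (pascal_r r j k.+1 * (-1) ^+ k.+1)
    = (-1) ^+ k.+1 * ((-1) ^+ j * ('C(n, j) * 'C(j, k.+1))%:R).
  rewrite /pascal_r /=; case: j => [|j] /=; first by rewrite bin_small // muln0 !(mul0r, mulr0).
  by rewrite natrM; ring.
under eq_bigr do rewrite term.
rewrite -mulr_sumr binomial_inversion.
by case: (eqVneq n k.+1) => [->|_]; rewrite ?eqxx ?mulr1 ?sign_sqr // !mulr0.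
Qed.

Theorem mainTheorem4 (r : int) (hr : r != 1) (M : mat) :
  in_cyclic_subgroup (A_r r) M -> pseudo_involution M.
Proof.
rewrite A_rE; apply: cyclic_subgroup_pseudo_involution.
- exact: lower_tri_pascal_r.
- exact: pascal_r_Ibar_invol.
Qed.
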